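(* Let $f:\mathbb{R}\to\mathbb{R}$ be a differentiable, increasing, concave function and $b'<b$ real numbers. Let $\alpha_*\in\mathbb{R}$ satisfy $f(\alpha_* )=b'$ and let $\alpha_0\in\mathbb{R}$ satisfy $f(\alpha_0)\le b$. Consider the Newton–Dinkelbach method started at $\alpha_0$: while $f(\alpha_t)<b'$, set $\alpha_{t+1}:=\alpha_t+\frac{b-f(\alpha_t)}{f'(\alpha_t)}$; output the first $\alpha_t$ with $f(\alpha_t)\ge b'$. Then it outputs $\alpha_0$ if $f(\alpha_0)\ge b'$; otherwise it outputs $\hat\alpha$ satisfying $f(\hat\alpha)\in[b',b]$ in at most \[T:=1+\left\lceil\log_{\frac{1}{1-\epsilon}}\left(\max\left\{1,\frac{D_f(\alpha_*\mid\alpha_0)}{b-b'}\right\}\right)\right\rceil\] iterations, for any $\epsilon\in(0,1)$ satisfying $\epsilon(b-f(\alpha_0))\le b-b'$, where $D_f(\beta\mid\alpha):=f'(\alpha)(\beta-\alpha)+f(\alpha)-f(\beta)$ is the Bregman divergence of $f$. *)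

From Stdlib Require Import Reals ZArith.
Open Scope R_scope.

Definition Rceil (x : R) : Z := (- Int_part (- x))%Z.

Definition logb (c x : R) : R := ln x / ln c.

Definition bregman (f f' : R -> R) (beta alpha : R) : R :=
  f' alpha * (beta - alpha) + f alpha - f beta.

Fixpoint nd_iter (f f' : R -> R) (b a0 : R) (t : nat) : R :=
  match t with
  | O => a0
  | S s => let a := nd_iter f f' b a0 s in a + (b - f a) / f' a
  end.

(* t is the first index at which the stopping test f(alpha_t) >= b' holds,
   i.e. the method outputs alpha_t after t iterations *)
Definition nd_stops_at (f f' : R -> R) (b b' a0 : R) (t : nat) : Prop :=
  b' <= f (nd_iter f f' b a0 t) /\
  forall s, (s < t)%nat -> f (nd_iter f f' b a0 s) < b'.

Definition concave (f : R -> R) : Prop :=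
  forall x y l, 0 <= l <= 1 -> l * f x + (1 - l) * f y <= f (l * x + (1 - l) * y).

From Stdlib Require Import Reals ZArith Lra Lia Psatz.
Open Scope R_scope.

(* Along the iterates f increases and stays below b. For a non-final step
   alpha -> alpha+, concavity gives f'(alpha+) <= (1 - eps) f'(alpha), which makes
   the Bregman divergence D_f(alpha_* | alpha_t) contract by the factor 1 - eps,
   while D_f(alpha_* | alpha) > b - b' as long as the next iterate has not reached
   b'. Hence only log_{1/(1-eps)} (D_f(alpha_* | alpha_0) / (b - b')) steps, plus
   the final one, can occur. *)

Lemma derivative_ge_of_slopes_ge (phi : R -> R) (d K : R) :
  derivable_pt_lim phi 0 d ->
  (forall l, 0 < l <= 1 -> l * K <= phi l - phi 0) -> K <= d.
Proof.
  intros Hd Hslope. apply Rnot_lt_le; intro Hlt.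
  destruct (Hd (K - d)) as [delta Hdelta]; [lra|].
  pose proof (cond_pos delta) as Hdelta_pos.
  set (l := Rmin 1 (delta / 2)).
  assert (Hl : 0 < l <= 1).
  { split; [apply Rmin_glb_lt; lra | apply Rmin_l]. }
  assert (Hl_delta : l < delta).
  { pose proof (Rmin_r 1 (delta / 2)) as Hr. fold l in Hr. lra. }
  assert (Habs_l : Rabs l < delta) by (rewrite Rabs_right; lra).
  specialize (Hdelta l (Rgt_not_eq _ _ (proj1 Hl)) Habs_l).
  rewrite Rplus_0_l in Hdelta.
  assert (Hquot : K <= (phi l - phi 0) / l).
  { apply Rmult_le_reg_r with l; [lra|].
    unfold Rdiv; rewrite Rmult_assoc, Rinv_l, Rmult_1_r by lra.
    rewrite Rmult_comm; apply Hslope, Hl. }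
  pose proof (Rle_abs ((phi l - phi 0) / l - d)). lra.
Qed.

Lemma concave_le_tangent (f f' : R -> R) :
  (forall x, derivable_pt_lim f x (f' x)) -> concave f ->
  forall x y, f y <= f x + f' x * (y - x).
Proof.
  intros Hder Hconc x y.
  set (segment := fun l => x + l * (y - x)).
  assert (Hsegment : derivable_pt_lim segment 0 (y - x)).
  { intros e He. exists (mkposreal 1 Rlt_0_1). intros h Hh _.
    unfold segment.
    replace ((x + (0 + h) * (y - x) - (x + 0 * (y - x))) / h - (y - x)) with 0
      by (field; exact Hh).
    rewrite Rabs_R0; exact He. }
  pose proof (derivable_pt_lim_comp _ f 0 _ _ Hsegment (Hder (segment 0))) as Hphi.
  replace (segment 0) with x in Hphi by (unfold segment; ring).
  enough (f y - f x <= f' x * (y - x)) by lra.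
  apply (derivative_ge_of_slopes_ge _ _ _ Hphi).
  intros l Hl. unfold comp, segment.
  replace (x + l * (y - x)) with (l * y + (1 - l) * x) by ring.
  replace (x + 0 * (y - x)) with x by ring.
  pose proof (Hconc y x l ltac:(lra)). lra.
Qed.

Lemma Rceil_ge (x : R) : x <= IZR (Rceil x).
Proof.
  unfold Rceil. rewrite opp_IZR.
  destruct (base_Int_part (- x)). lra.
Qed.

Lemma logb_ge0 (c M : R) : 1 < c -> 1 <= M -> 0 <= logb c M.
Proof.
  intros Hc HM. unfold logb, Rdiv.
  apply Rmult_le_pos.
  - rewrite <- ln_1. destruct (Rle_lt_or_eq_dec 1 M HM) as [Hlt | <-].
    + left. apply ln_increasing; lra.
    + right. reflexivity.
  - left. apply Rinv_0_lt_compat. rewrite <- ln_1. apply ln_increasing; lra.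
Qed.

Lemma lt_logb_of_pow_lt (c M : R) (m : nat) : 1 < c -> c ^ m < M -> INR m < logb c M.
Proof.
  intros Hc Hm.
  assert (Hlnc : 0 < ln c) by (rewrite <- ln_1; apply ln_increasing; lra).
  assert (Hln : INR m * ln c < ln M).
  { rewrite <- ln_pow by lra. apply ln_increasing; [apply pow_lt; lra | exact Hm]. }
  unfold logb. apply Rmult_lt_reg_r with (ln c); [exact Hlnc|].
  unfold Rdiv; rewrite Rmult_assoc, Rinv_l, Rmult_1_r by lra. exact Hln.
Qed.

Lemma first_hit_or_none (P : nat -> Prop) (N : nat) :
  (forall n, P n \/ ~ P n) ->
  (forall s, (s <= N)%nat -> ~ P s) \/
  exists t, (t <= N)%nat /\ P t /\ forall s, (s < t)%nat -> ~ P s.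
Proof.
  intros Hdec. induction N as [|N IH].
  - destruct (Hdec 0%nat) as [H|H].
    + right. exists 0%nat. split; [lia|]. split; [exact H | intros; lia].
    + left. intros s Hs. replace s with 0%nat by lia. exact H.
  - destruct IH as [Hnone|[t [HtN Ht]]].
    + destruct (Hdec (S N)) as [H|H].
      * right. exists (S N). split; [lia|]. split; [exact H|].
        intros s Hs. apply Hnone. lia.
      * left. intros s Hs. destruct (Nat.eq_dec s (S N)) as [->|Hne]; [exact H|].
        apply Hnone. lia.
    + right. exists t. split; [lia | exact Ht].
Qed.

Section NewtonDinkelbach.

Variables (f f' : R -> R) (b b' astar : R).
Hypothesis Hder : forall x, derivable_pt_lim f x (f' x).
Hypothesis Hinc : forall x y, x <= y -> f x <= f y.
Hypothesis Hconc : concave f.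
Hypothesis Hgap : b' < b.
Hypothesis Hstar : f astar = b'.

Let le_tangent := concave_le_tangent f f' Hder Hconc.

Definition newton_step (a : R) : R := a + (b - f a) / f' a.

Lemma nd_iter_S a0 t : nd_iter f f' b a0 (S t) = newton_step (nd_iter f f' b a0 t).
Proof. reflexivity. Qed.

Lemma lt_root_of_below_target a : f a < b' -> a < astar.
Proof. intro Ha. apply Rnot_le_lt; intro Hle. apply Hinc in Hle. lra. Qed.

Lemma deriv_pos_of_below_target a : f a < b' -> 0 < f' a.
Proof.
  intro Ha. pose proof (lt_root_of_below_target a Ha).
  pose proof (le_tangent a astar). nra.
Qed.

Lemma newton_step_tangent a : 0 < f' a -> f' a * (newton_step a - a) = b - f a.
Proof. intro Hd. unfold newton_step. field. lra. Qed.

Lemma f_newton_step_le a : 0 < f' a -> f (newton_step a) <= b.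
Proof.
  intro Hd. pose proof (le_tangent a (newton_step a)).
  rewrite newton_step_tangent in * by exact Hd. lra.
Qed.

Lemma le_newton_step a : 0 < f' a -> f a <= b -> a <= newton_step a.
Proof.
  intros Hd Ha. pose proof (newton_step_tangent a Hd). nra.
Qed.

Lemma bregman_newton_step a :
  0 < f' a -> bregman f f' astar a = f' a * (astar - newton_step a) + (b - b').
Proof.
  intro Hd. pose proof (newton_step_tangent a Hd).
  unfold bregman. rewrite Hstar. nra.
Qed.

Lemma gap_lt_bregman a :
  f a < b' -> f (newton_step a) < b' -> b - b' < bregman f f' astar a.
Proof.
  intros Ha Hnext. pose proof (deriv_pos_of_below_target a Ha) as Hd.
  pose proof (lt_root_of_below_target _ Hnext).
  rewrite bregman_newton_step by exact Hd. nra.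
Qed.

(* Tangents at [a] and at [newton_step a] sandwich [f (newton_step a) - f a]. *)
Lemma deriv_newton_step_le eps a :
  0 < f' a -> f a < b -> eps * (b - f a) <= b - f (newton_step a) ->
  f' (newton_step a) <= (1 - eps) * f' a.
Proof.
  intros Hd Ha Hprogress.
  pose proof (newton_step_tangent a Hd) as Hstep.
  pose proof (le_tangent (newton_step a) a) as Htan.
  assert (Hslope : f' (newton_step a) * (b - f a) <= f' a * (f (newton_step a) - f a)).
  { rewrite <- Hstep. nra. }
  apply Rmult_le_reg_r with (b - f a); nra.
Qed.

Lemma bregman_newton_step_contract eps a :
  eps <= 1 -> f a < b' -> f (newton_step a) < b' -> eps * (b - f a) <= b - b' ->
  bregman f f' astar (newton_step a) <= (1 - eps) * bregman f f' astar a.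
Proof.
  intros Heps Ha Hnext Hstart.
  pose proof (deriv_pos_of_below_target a Ha) as Hd.
  pose proof (lt_root_of_below_target _ Hnext) as Hroot.
  assert (Hderiv : f' (newton_step a) <= (1 - eps) * f' a).
  { apply deriv_newton_step_le; lra. }
  rewrite (bregman_newton_step a Hd).
  unfold bregman. rewrite Hstar.
  assert (f' (newton_step a) * (astar - newton_step a)
          <= (1 - eps) * f' a * (astar - newton_step a))
    by (apply Rmult_le_compat_r; lra).
  nra.
Qed.

Variable a0 : R.
Notation alpha := (nd_iter f f' b a0).

Lemma f_nd_iter_ge_start m :
  (forall s, (s <= m)%nat -> f (alpha s) < b') -> f a0 <= f (alpha m).
Proof.
  induction m as [|m IH]; intro Hrun; [apply Rle_refl|].
  assert (Hm : f (alpha m) < b') by (apply Hrun; lia).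
  rewrite nd_iter_S. apply Rle_trans with (f (alpha m)).
  - apply IH. intros s Hs. apply Hrun. lia.
  - apply Hinc, le_newton_step; [apply deriv_pos_of_below_target|]; lra.
Qed.

Lemma f_nd_iter_le_target t :
  f a0 <= b -> (forall s, (s < t)%nat -> f (alpha s) < b') -> f (alpha t) <= b.
Proof.
  intros H0 Hrun. destruct t as [|t]; [exact H0|].
  rewrite nd_iter_S. apply f_newton_step_le, deriv_pos_of_below_target, Hrun. lia.
Qed.

Variable eps : R.
Hypothesis Heps : 0 < eps < 1.
Hypothesis Hstart : eps * (b - f a0) <= b - b'.

Lemma one_lt_rate : 1 < 1 / (1 - eps).
Proof.
  apply Rmult_lt_reg_r with (1 - eps); [lra|].
  replace (1 / (1 - eps) * (1 - eps)) with 1 by (field; lra). lra.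
Qed.

Lemma bregman_nd_iter_geometric m :
  (forall s, (s <= m)%nat -> f (alpha s) < b') ->
  bregman f f' astar (alpha m) <= (1 - eps) ^ m * bregman f f' astar a0.
Proof.
  induction m as [|m IH]; intro Hrun; [simpl; lra|].
  assert (Hm : f (alpha m) < b') by (apply Hrun; lia).
  assert (Hmono : f a0 <= f (alpha m))
    by (apply f_nd_iter_ge_start; intros s Hs; apply Hrun; lia).
  rewrite nd_iter_S.
  eapply Rle_trans; [apply (bregman_newton_step_contract eps)|].
  - lra.
  - exact Hm.
  - rewrite <- nd_iter_S. apply Hrun. lia.
  - nra.
  - simpl. rewrite Rmult_assoc. apply Rmult_le_compat_l; [lra|].
    apply IH. intros s Hs. apply Hrun. lia.
Qed.

Lemma nd_iter_count_lt_logb m :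
  (forall s, (s <= S m)%nat -> f (alpha s) < b') ->
  INR m < logb (1 / (1 - eps)) (Rmax 1 (bregman f f' astar a0 / (b - b'))).
Proof.
  intro Hrun.
  assert (Hgap_m : b - b' < bregman f f' astar (alpha m)).
  { apply gap_lt_bregman; [apply Hrun; lia|].
    rewrite <- nd_iter_S. apply Hrun. lia. }
  pose proof (bregman_nd_iter_geometric m) as Hgeom.
  specialize (Hgeom ltac:(intros s Hs; apply Hrun; lia)).
  assert (Hp : 0 < (1 - eps) ^ m) by (apply pow_lt; lra).
  apply lt_logb_of_pow_lt; [exact one_lt_rate|].
  replace (1 / (1 - eps)) with (/ (1 - eps)) by (field; lra).
  apply Rlt_le_trans with (bregman f f' astar a0 / (b - b')); [|apply Rmax_r].
  rewrite pow_inv. apply Rmult_lt_reg_l with ((1 - eps) ^ m * (b - b')); [nra|].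
  replace ((1 - eps) ^ m * (b - b') * / (1 - eps) ^ m) with (b - b') by (field; lra).
  replace ((1 - eps) ^ m * (b - b') * (bregman f f' astar a0 / (b - b')))
    with ((1 - eps) ^ m * bregman f f' astar a0) by (field; lra).
  lra.
Qed.

End NewtonDinkelbach.

Theorem theorem2p20 (f f' : R -> R) (b b' astar a0 : R)
  (Hder : forall x, derivable_pt_lim f x (f' x))
  (Hinc : forall x y, x <= y -> f x <= f y)
  (Hconc : concave f)
  (Hbb : b' < b)
  (Hstar : f astar = b')
  (H0 : f a0 <= b) :
  (b' <= f a0 -> nd_stops_at f f' b b' a0 0 /\ nd_iter f f' b a0 0 = a0) /\
  (f a0 < b' ->
    forall eps, 0 < eps < 1 -> eps * (b - f a0) <= b - b' ->
    exists t, nd_stops_at f f' b b' a0 t /\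
      b' <= f (nd_iter f f' b a0 t) <= b /\
      (Z.of_nat t <= 1 + Rceil (logb (1 / (1 - eps))
                          (Rmax 1 (bregman f f' astar a0 / (b - b')))))%Z).
Proof.
  split.
  { intro Hstop. split; [split; [exact Hstop | intros s Hs; lia] | reflexivity]. }
  intros Hlt eps Heps Hstart.
  set (L := logb (1 / (1 - eps)) (Rmax 1 (bregman f f' astar a0 / (b - b')))).
  pose proof (Rceil_ge L) as HceilL.
  assert (HL : 0 <= L) by (apply logb_ge0; [exact (one_lt_rate eps Heps) | apply Rmax_l]).
  assert (Hceil : (0 <= Rceil L)%Z) by (apply le_IZR; lra).
  destruct (first_hit_or_none (fun s => b' <= f (nd_iter f f' b a0 s))
              (S (Z.to_nat (Rceil L)))) as [Hnone | [t [HtN [Ht Hbefore]]]].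
  - intro n. destruct (Rle_dec b' (f (nd_iter f f' b a0 n))); auto.
  - exfalso.
    assert (Hcount : INR (Z.to_nat (Rceil L)) < L).
    { eapply nd_iter_count_lt_logb; try eassumption.
      intros s Hs. apply Rnot_le_lt, Hnone, Hs. }
    rewrite INR_IZR_INZ, Z2Nat.id in Hcount by exact Hceil. lra.
  - assert (Hrun : forall s, (s < t)%nat -> f (nd_iter f f' b a0 s) < b')
      by (intros s Hs; apply Rnot_le_lt, Hbefore, Hs).
    exists t. split; [split; assumption|].
    split; [split; [exact Ht|] | lia].
    eapply f_nd_iter_le_target; eassumption.
Qed.
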